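(* Let $L$ be an infinite set and consider the edgeless cube $Q_L$. Let $f$ be a legal configuration accessible from $f_{\mathrm{solved}}$ and let $C$ be a non-center cluster, whose unique representative in the quadrant $D$ is $(\alpha,\beta,+\infty)$ with $\alpha\in L$, $\beta\in\{0\}\cup L$. Then there is a finite basic sequence $s$ such that, if $g$ is the terminal configuration of $s$ applied to $f$, then $g(c)=f_{\mathrm{solved}}(c)$ for all $c\in C$ and $g(c)=f(c)$ for all cells $c\notin C$. Moreover, $s$ uses only face twists and basic twists of the form $T_{i,\gamma}^j$ with $i\in\{x,y,z\}$, $\gamma\in\{\alpha,-\alpha,\beta,-\beta\}$, $j\in\{1,2,3\}$.
   Context: Let $L$ be an infinite set, $-L=\{-r:r\in L\}$ a disjoint copy of $L$, and $0$ a new element; $L^\dagger=-L\cup\{0\}\cup L$ with $-(-r)=r$, $-0=0$. Adjoin $\pm\infty$ with $-(+\infty)=-\infty$ and set $\bar L^\dagger=L^\dagger\cup\{\pm\infty\}$. Points of $U=(\bar L^\dagger)^3$ have coordinates $x,y,z$. The edgeless cube $Q_L$ is the set of cells: points of $U$ with exactly one coordinate in $\{\pm\infty\}$. For $i\in\{x,y,z\}$, $\alpha\in\bar L^\dagger$, the quarter-turn twist $T_{i,\alpha}$ is the permutation of cells fixing every cell $p$ with $p_i\ne\alpha$ and acting on the others by $T_{x,\alpha}(\alpha,y,z)=(\alpha,-z,y)$, $T_{y,\alpha}(x,\alpha,z)=(z,\alpha,-x)$, $T_{z,\alpha}(x,y,\alpha)=(-y,x,\alpha)$; face twists are the basic twists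 with $\alpha=\pm\infty$. Basic twists are $T,T^2,T^3$ for quarter-turn twists $T$. A basic sequence is a sequence $\langle\sigma_\eta:\eta<\theta\rangle$ of basic twists of ordinal length $\theta$. A configuration is a map $f$ from cells to the six colors red, white, green, orange, yellow, blue together with a special value NaC; it is legal if it never takes value NaC. The solved configuration $f_{\mathrm{solved}}$ colors a cell red, blue, white, orange, green, yellow according as $x=+\infty$, $y=+\infty$, $z=+\infty$, $x=-\infty$, $y=-\infty$, $z=-\infty$. A twist $\sigma$ acts by $(\sigma f)(c)=f(\sigma^{-1}c)$. Applying $\langle\sigma_\eta:\eta<\theta\rangle$ to $f_0$ produces $f_{\eta+1}=\sigma_\eta f_\eta$, and for limit $\lambda\le\theta$, $f_\lambda(c)$ is the eventually constant value of $f_\eta(c)$ ($\eta<\lambda$) if it exists and NaC otherwise; $f_\theta$ is the terminal configuration. $f$ is accessible from $f_0$ if it is the terminal configuration of some basic sequence applied to $f_0$. The cluster of a cell is its orbit under the group generated by all quarter-turn twists; the six center cells (two coordinates equal to $0$) form the center cluster, and the others are non-center. $D=\{(x,y,+\infty):x\in L,\ y\in\{0\}\cup L\}$; every non-center cluster contains exactly one cell of $D$. *)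

From Stdlib Require Import List ClassicalEpsilon Relation_Operators.

Inductive Ldag (L : Type) : Type := LNeg (r : L) | LZero | LPos (r : L).
Arguments LNeg {L} r.  Arguments LZero {L}.  Arguments LPos {L} r.

Definition ldneg {L : Type} (a : Ldag L) : Ldag L :=
  match a with LNeg r => LPos r | LZero => LZero | LPos r => LNeg r end.

Inductive coord (L : Type) : Type := Fin (a : Ldag L) | PInf | NInf.
Arguments Fin {L} a.  Arguments PInf {L}.  Arguments NInf {L}.

Definition cneg {L : Type} (c : coord L) : coord L :=
  match c with Fin a => Fin (ldneg a) | PInf => NInf | NInf => PInf end.

Record point (L : Type) : Type := mkP { px : coord L; py : coord L; pz : coord L }.
Arguments mkP {L} _ _ _.  Arguments px {L} _.  Arguments py {L} _.  Arguments pz {L} _.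

Inductive axis : Type := AX | AY | AZ.

Definition pcoord {L : Type} (i : axis) (p : point L) : coord L :=
  match i with AX => px p | AY => py p | AZ => pz p end.

Definition is_inf {L : Type} (c : coord L) : Prop := c = PInf \/ c = NInf.

Definition is_cell {L : Type} (p : point L) : Prop :=
  (is_inf (px p) /\ ~ is_inf (py p) /\ ~ is_inf (pz p)) \/
  (~ is_inf (px p) /\ is_inf (py p) /\ ~ is_inf (pz p)) \/
  (~ is_inf (px p) /\ ~ is_inf (py p) /\ is_inf (pz p)).

Definition qt {L : Type} (i : axis) (a : coord L) (p : point L) : point L :=
  if excluded_middle_informative (pcoord i p = a) then
    match i with
    | AX => mkP (px p) (cneg (pz p)) (py p)
    | AY => mkP (pz p) (py p) (cneg (px p))
    | AZ => mkP (cneg (py p)) (px p) (pz p)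
    end
  else p.

Inductive pow : Type := P1 | P2 | P3.
Definition pow_nat (j : pow) : nat := match j with P1 => 1 | P2 => 2 | P3 => 3 end.

Record twist (L : Type) : Type :=
  mkTw { tw_axis : axis; tw_level : coord L; tw_pow : pow }.
Arguments mkTw {L} _ _ _.
Arguments tw_axis {L} _.  Arguments tw_level {L} _.  Arguments tw_pow {L} _.

Definition twist_fun {L : Type} (t : twist L) (p : point L) : point L :=
  Nat.iter (pow_nat (tw_pow t)) (qt (tw_axis t) (tw_level t)) p.
Definition twist_inv {L : Type} (t : twist L) (p : point L) : point L :=
  Nat.iter (4 - pow_nat (tw_pow t)) (qt (tw_axis t) (tw_level t)) p.

Definition is_face {L : Type} (t : twist L) : Prop := is_inf (tw_level t).

Inductive color : Type := Red | White | Green | Orange | Yellow | Blue.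

(* configurations; None = NaC.  Only values on cells are meaningful. *)
Definition config (L : Type) : Type := point L -> option color.

Definition legal {L : Type} (f : config L) : Prop :=
  forall c, is_cell c -> f c <> None.

Definition solved (L : Type) : config L := fun p =>
  match px p, py p, pz p with
  | PInf, _, _ => Some Red
  | _, PInf, _ => Some Blue
  | _, _, PInf => Some White
  | NInf, _, _ => Some Orange
  | _, NInf, _ => Some Green
  | _, _, NInf => Some Yellow
  | _, _, _ => None
  end.

Definition act {L : Type} (t : twist L) (f : config L) : config L :=
  fun c => f (twist_inv t c).

(* a well-order on W: strict, well-founded, transitive, total; W with lt
   plays the role of the ordinal theta *)
Definition well_order {W : Type} (lt : W -> W -> Prop) : Prop :=
  well_founded lt /\ (forall a b c, lt a b -> lt b c -> lt a c) /\
  (forall a b, lt a b \/ a = b \/ lt b a).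

(* stages eta <= theta : Some w for w in W, None for theta itself *)
Definition slt {W : Type} (lt : W -> W -> Prop) (s t : option W) : Prop :=
  match s, t with
  | Some a, Some b => lt a b
  | Some _, None => True
  | None, _ => False
  end.

(* F is the run of the basic sequence sigma (indexed by W) applied to f0:
   F s = f_s for each stage s <= theta (checked on cells). *)
Definition Run {L W : Type} (lt : W -> W -> Prop) (sigma : W -> twist L)
    (f0 : config L) (F : option W -> config L) : Prop :=
  forall s : option W,
    (* s = 0 *)
    ((forall t, ~ slt lt t s) -> forall c, is_cell c -> F s c = f0 c) /\
    (* s = w + 1 *)
    (forall w, slt lt (Some w) s -> (forall t, ~ (slt lt (Some w) t /\ slt lt t s)) ->
       forall c, is_cell c -> F s c = act (sigma w) (F (Some w)) c) /\
    (* s limit *)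
    ((exists t, slt lt t s) -> (forall t, slt lt t s -> exists u, slt lt t u /\ slt lt u s) ->
       forall c, is_cell c ->
         (forall v, (exists t, slt lt t s /\
                      forall u, (u = t \/ slt lt t u) -> slt lt u s -> F u c = v) ->
                    F s c = v) /\
         ((~ exists v t, slt lt t s /\
                      forall u, (u = t \/ slt lt t u) -> slt lt u s -> F u c = v) ->
          F s c = None)).

Definition accessible {L : Type} (f0 f : config L) : Prop :=
  exists (W : Type) (lt : W -> W -> Prop) (sigma : W -> twist L)
         (F : option W -> config L),
    well_order lt /\ Run lt sigma f0 F /\ forall c, is_cell c -> F None c = f c.

(* finite basic sequence applied to f (first element applied first) *)
Definition apply_list {L : Type} (s : list (twist L)) (f : config L) : config L :=
  fold_left (fun g t => act t g) s f.

(* same cluster: orbit under the group generated by quarter-turn twists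
   (each has order 4, so the orbit is the reflexive-transitive closure) *)
Definition same_cluster {L : Type} (c d : point L) : Prop :=
  clos_refl_trans (point L) (fun p q => exists i a, q = qt i a p) c d.

Definition infinite_type (L : Type) : Prop :=
  ~ exists s : list L, forall x : L, In x s.

From Stdlib Require Import List Arith Lia Bool PArith FMapPositive Permutation
  Classical ClassicalEpsilon Relation_Operators.
Import ListNotations.

(* Fix the cluster C of (alpha, beta, +oo); it has 24 cells, 4 of each solved
   colour.  Every twist permutes C, and at a limit stage a cell keeps a colour
   only if it had it from some earlier stage on, so along a basic sequence
   starting from the solved cube no colour ever shows on more than 4 cells of C.
   A legal accessible f thus shows every colour exactly 4 times on C, i.e. its
   colours on C are a permutation of the solved ones, and they can be sorted by
   3-cycles of C fixing all other cells: conjugates of the 3-cycle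
   [[T_{x,alpha}, T_{y,beta}], T_{z,+oo}].

   That a twist word acts on the cube in a given way is decided by computation:
   a point is described by which of its coordinates are among the levels
   +-alpha, +-beta, +-oo, and there are three cases (beta not in {0, alpha},
   beta = 0, beta = alpha) according to which of these levels coincide. *)

Definition color_eq_dec (a b : color) : {a = b} + {a <> b}.
Proof. decide equality. Defined.

Definition ocolor_eq_dec (a b : option color) : {a = b} + {a <> b}.
Proof. decide equality; apply color_eq_dec. Defined.

Lemma cneg_involutive {L : Type} (x : coord L) : cneg (cneg x) = x.
Proof. destruct x as [[]| |]; reflexivity. Qed.

Definition source_cell {L : Type} (s : list (twist L)) (x : point L) : point L :=
  fold_right twist_inv x s.

Lemma apply_list_source {L : Type} (s : list (twist L)) (f : config L) x :
  apply_list s f x = f (source_cell s x).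
Proof.
  revert f; induction s as [|t s IH]; intro f; [reflexivity|].
  exact (IH (act t f)).
Qed.

Lemma same_cluster_iter_qt {L : Type} i (a : coord L) n p :
  same_cluster p (Nat.iter n (qt i a) p).
Proof.
  induction n as [|n IH]; [apply rt_refl|].
  eapply rt_trans; [exact IH|]. apply rt_step. exists i, a. reflexivity.
Qed.

Lemma same_cluster_source {L : Type} (s : list (twist L)) x : same_cluster x (source_cell s x).
Proof.
  induction s as [|t s IH]; [apply rt_refl|].
  eapply rt_trans; [exact IH|]. apply same_cluster_iter_qt.
Qed.

Lemma apply_list_app {L : Type} (s1 s2 : list (twist L)) (f : config L) :
  apply_list (s1 ++ s2) f = apply_list s2 (apply_list s1 f).
Proof. apply fold_left_app. Qed.

Lemma count_occ_map_le {A B : Type} (eq_dec : forall x y : B, {x = y} + {x <> y})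
  (g1 g2 : A -> B) l x :
  (forall a, In a l -> g1 a = x -> g2 a = x) ->
  count_occ eq_dec (map g1 l) x <= count_occ eq_dec (map g2 l) x.
Proof.
  induction l as [|a l IH]; intro H; simpl; [lia|].
  specialize (IH (fun b Hb => H b (or_intror Hb))).
  destruct (eq_dec (g1 a) x) as [E|].
  - rewrite (H a (or_introl eq_refl) E). destruct (eq_dec x x); [lia | congruence].
  - destruct (eq_dec (g2 a) x); lia.
Qed.

Lemma length_count_colours (l : list (option color)) :
  length l = count_occ ocolor_eq_dec l None +
    count_occ ocolor_eq_dec l (Some Red) + count_occ ocolor_eq_dec l (Some White) +
    count_occ ocolor_eq_dec l (Some Green) + count_occ ocolor_eq_dec l (Some Orange) +
    count_occ ocolor_eq_dec l (Some Yellow) + count_occ ocolor_eq_dec l (Some Blue).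
Proof. induction l as [|[[]|] l IH]; simpl; lia. Qed.

Lemma Permutation_map_seq n (h : nat -> nat) :
  (forall a, a < n -> h a < n) -> (forall a b, a < n -> b < n -> h a = h b -> a = b) ->
  Permutation (map h (seq 0 n)) (seq 0 n).
Proof.
  intros Hrange Hinj. apply NoDup_Permutation_bis.
  - apply NoDup_map_NoDup_ForallPairs; [|apply seq_NoDup].
    intros a b Ha Hb. apply in_seq in Ha, Hb. apply Hinj; lia.
  - now rewrite length_map.
  - intros y Hy. apply in_map_iff in Hy as [a [<- Ha]]. apply in_seq in Ha.
    apply in_seq. specialize (Hrange a). lia.
Qed.

Section Stages.
Context {W : Type} (lt : W -> W -> Prop).

Lemma slt_wf : well_founded lt -> well_founded (slt lt).
Proof.
  intro wf.
  assert (HS : forall w, Acc (slt lt) (Some w)).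
  { intro w. induction (wf w) as [w _ IH].
    constructor. intros [y|] Hy; [apply IH, Hy | contradiction]. }
  intros [w|]; [apply HS|]. constructor. intros [y|] Hy; [apply HS | contradiction].
Qed.

Lemma slt_trans : (forall a b c, lt a b -> lt b c -> lt a c) ->
  forall s t u, slt lt s t -> slt lt t u -> slt lt s u.
Proof. intros tr [a|] [b|] [c|]; simpl; eauto; contradiction. Qed.

Lemma slt_total : (forall a b, lt a b \/ a = b \/ lt b a) ->
  forall s t, slt lt s t \/ s = t \/ slt lt t s.
Proof.
  intros tot [a|] [b|]; simpl; auto.
  destruct (tot a b) as [|[->|]]; auto.
Qed.

End Stages.

Section Eventually.
Context {T : Type} (lt : T -> T -> Prop).
Hypothesis lt_trans : forall a b c, lt a b -> lt b c -> lt a c.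
Hypothesis lt_total : forall a b, lt a b \/ a = b \/ lt b a.

Definition eventually_below (s : T) (P : T -> Prop) : Prop :=
  exists t, lt t s /\ forall u, (u = t \/ lt t u) -> lt u s -> P u.

Lemma eventually_below_and s (P Q : T -> Prop) :
  eventually_below s P -> eventually_below s Q -> eventually_below s (fun u => P u /\ Q u).
Proof.
  intros [t1 [H1 P1]] [t2 [H2 Q2]].
  assert (Hlater : forall t t', (t' = t \/ lt t t') ->
                   forall u, (u = t' \/ lt t' u) -> u = t \/ lt t u).
  { intros t t' [-> | Ht] u [-> | Hu]; eauto. }
  destruct (lt_total t1 t2) as [Hlt | [<- | Hlt]].
  - exists t2. split; [exact H2|]. intros u Hu Hs. split; [|auto].
    apply P1; [apply (Hlater t1 t2); auto | exact Hs].
  - exists t1. split; [exact H1|]. auto.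
  - exists t1. split; [exact H1|]. intros u Hu Hs. split; [auto|].
    apply Q2; [apply (Hlater t2 t1); auto | exact Hs].
Qed.

Lemma eventually_below_Forall {A : Type} s (P : A -> T -> Prop) l :
  (exists t, lt t s) -> (forall a, In a l -> eventually_below s (P a)) ->
  eventually_below s (fun u => forall a, In a l -> P a u).
Proof.
  intros [t0 H0]. induction l as [|a l IH]; intro Hl.
  - exists t0. split; [exact H0|]. intros u _ _ a [].
  - destruct (eventually_below_and s (P a) _ (Hl a (or_introl eq_refl))
                (IH (fun b Hb => Hl b (or_intror Hb)))) as [t [Ht Hu]].
    exists t. split; [exact Ht|]. intros u H1 H2 b [<- | Hb].
    + exact (proj1 (Hu u H1 H2)).
    + exact (proj2 (Hu u H1 H2) b Hb).
Qed.

End Eventually.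

Lemma Run_limit_eventually {L W : Type} (lt : W -> W -> Prop) sigma (f0 : config L) F s c col :
  Run lt sigma f0 F -> (exists t, slt lt t s) ->
  (forall t, slt lt t s -> exists u, slt lt t u /\ slt lt u s) -> is_cell c ->
  F s c = Some col -> eventually_below (slt lt) s (fun u => F u c = Some col).
Proof.
  intros HR Hne Hl Hc E. destruct (HR s) as [_ [_ Hlim]].
  destruct (Hlim Hne Hl c Hc) as [Hv HNaC].
  destruct (classic (exists v, eventually_below (slt lt) s (fun u => F u c = v)))
    as [[v Hv'] | Hnone].
  - rewrite (Hv v Hv') in E. subst v. exact Hv'.
  - rewrite (HNaC Hnone) in E. discriminate.
Qed.

(** * The symbolic cube *)

Inductive level : Type := Alpha | NAlpha | Beta | NBeta | PosInf | NegInf.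

Definition level_neg (s : level) : level :=
  match s with
  | Alpha => NAlpha | NAlpha => Alpha | Beta => NBeta | NBeta => Beta
  | PosInf => NegInf | NegInf => PosInf
  end.

Inductive beta_kind : Type := BetaOther | BetaZero | BetaAlpha.

(* [canon k] picks one representative among the levels that coincide when
   [beta] is of kind [k]: [-0 = 0] and [beta = alpha] respectively. *)
Definition canon (k : beta_kind) (s : level) : level :=
  match k, s with
  | BetaZero, NBeta => Beta
  | BetaAlpha, Beta => Alpha
  | BetaAlpha, NBeta => NAlpha
  | _, _ => s
  end.

(* A symbolic coordinate is a level, or the coordinate [i] of an ambient point
   [p], negated when [b = false]. *)
Inductive scoord : Type := Lev (s : level) | Var (i : axis) (b : bool).

Record spoint : Type := SP { sx : scoord; sy : scoord; sz : scoord }.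

Definition level_eq_dec (s t : level) : {s = t} + {s <> t}.
Proof. decide equality. Defined.

Definition scoord_eq_dec (x y : scoord) : {x = y} + {x <> y}.
Proof. decide equality; [apply level_eq_dec | apply bool_dec | decide equality]. Defined.

Definition spoint_eq_dec (m n : spoint) : {m = n} + {m <> n}.
Proof. decide equality; apply scoord_eq_dec. Defined.

Definition spoint_eqb (m n : spoint) : bool := if spoint_eq_dec m n then true else false.

Lemma spoint_eqb_eq m n : spoint_eqb m n = true -> m = n.
Proof. unfold spoint_eqb. destruct (spoint_eq_dec m n); congruence. Qed.

Definition sneg (k : beta_kind) (x : scoord) : scoord :=
  match x with Lev s => Lev (canon k (level_neg s)) | Var i b => Var i (negb b) end.

Definition at_level (k : beta_kind) (x : scoord) (s : level) : bool :=
  match x with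
  | Lev t => if level_eq_dec (canon k t) (canon k s) then true else false
  | Var _ _ => false
  end.

Definition spcoord (i : axis) (m : spoint) : scoord :=
  match i with AX => sx m | AY => sy m | AZ => sz m end.

Definition sqt (k : beta_kind) (i : axis) (s : level) (m : spoint) : spoint :=
  if at_level k (spcoord i m) s then
    match i with
    | AX => SP (sx m) (sneg k (sz m)) (sy m)
    | AY => SP (sz m) (sy m) (sneg k (sx m))
    | AZ => SP (sneg k (sy m)) (sx m) (sz m)
    end
  else m.

Definition stwist : Type := (axis * level * pow)%type.

Definition stwist_inv (k : beta_kind) (t : stwist) (m : spoint) : spoint :=
  let '(i, s, j) := t in Nat.iter (4 - pow_nat j) (sqt k i s) m.

Definition ssource (k : beta_kind) (w : list stwist) (m : spoint) : spoint :=
  fold_right (stwist_inv k) m w.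

Definition all_axes : list axis := [AX; AY; AZ].
Definition all_levels : list level := [Alpha; NAlpha; Beta; NBeta; PosInf; NegInf].
Definition all_pows : list pow := [P1; P2; P3].
Definition all_stwists : list stwist :=
  flat_map (fun i => flat_map (fun s => map (fun j => (i, s, j)) all_pows) all_levels) all_axes.

Definition pow_inv (j : pow) : pow := match j with P1 => P3 | P2 => P2 | P3 => P1 end.

Definition sword_inv (w : list stwist) : list stwist :=
  rev (map (fun '(i, s, j) => (i, s, pow_inv j)) w).

Definition commutator (u v : list stwist) : list stwist :=
  u ++ v ++ sword_inv u ++ sword_inv v.

Definition base_cycle : list stwist :=
  commutator (commutator [(AX, Alpha, P1)] [(AY, Beta, P1)]) [(AZ, PosInf, P1)].

(* Up to its coordinates that are not levels, every point of the cube is one of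
   these finitely many shapes (see [abstract_point_spec]). *)
Definition shape_coords (k : beta_kind) (i : axis) : list scoord :=
  map (fun s => Lev (canon k s)) all_levels ++ [Var i true].

Definition shapes (k : beta_kind) : list spoint :=
  flat_map (fun a => flat_map (fun b => map (SP a b) (shape_coords k AZ))
                              (shape_coords k AY))
           (shape_coords k AX).

Definition is_infb (x : scoord) : bool :=
  match x with Lev PosInf | Lev NegInf => true | _ => false end.

Definition scell (m : spoint) : bool :=
  Nat.b2n (is_infb (sx m)) + Nat.b2n (is_infb (sy m)) + Nat.b2n (is_infb (sz m)) =? 1.

Definition levelled (m : spoint) : bool :=
  match m with SP (Lev _) (Lev _) (Lev _) => true | _ => false end.

Definition ssolved (m : spoint) : option color :=
  match m with
  | SP (Lev PosInf) _ _ => Some Red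
  | SP _ (Lev PosInf) _ => Some Blue
  | SP _ _ (Lev PosInf) => Some White
  | SP (Lev NegInf) _ _ => Some Orange
  | SP _ (Lev NegInf) _ => Some Green
  | SP _ _ (Lev NegInf) => Some Yellow
  | _ => None
  end.

Definition all_colors : list color := [Red; White; Green; Orange; Yellow; Blue].

(** * Certified twist words *)

Section Search.
Variables (A G : Type) (key : A -> positive) (next : A -> list (G * A)).

Definition bfs_expand (acc : list (A * list G) * PositiveMap.t (list G)) (x : A * list G) :=
  fold_left (fun acc gy =>
    let '(frontier, seen) := acc in
    let '(g, y) := gy in
    match PositiveMap.find (key y) seen with
    | Some _ => acc
    | None => ((y, g :: snd x) :: frontier, PositiveMap.add (key y) (g :: snd x) seen)
    end) (next (fst x)) acc.

Fixpoint bfs (fuel : nat) (frontier : list (A * list G)) (seen : PositiveMap.t (list G)) :=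
  match fuel with
  | 0 => seen
  | S n =>
      match fold_left bfs_expand frontier ([], seen) with
      | ([], seen') => seen'
      | (frontier', seen') => bfs n frontier' seen'
      end
  end.

(* Maps the key of each state reachable from [x0] to a word leading there from
   [x0]; the word lists the moves last one first. *)
Definition search (x0 : A) : PositiveMap.t (list G) :=
  bfs 100 [(x0, [])] (PositiveMap.add (key x0) [] (PositiveMap.empty _)).

End Search.

Definition search_word {G : Type} (T : PositiveMap.t (list G)) (key : positive) : list G :=
  match PositiveMap.find key T with Some w => w | None => [] end.

Definition level_code (s : level) : positive :=
  match s with
  | Alpha => 1 | NAlpha => 2 | Beta => 3 | NBeta => 4 | PosInf => 5 | NegInf => 6
  end.

Definition scoord_code (x : scoord) : positive :=
  match x with Lev s => level_code s | Var _ _ => 7 end.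

Definition spoint_key (m : spoint) : positive :=
  ((scoord_code (sx m) * 8 + scoord_code (sy m)) * 8 + scoord_code (sz m))%positive.

Definition rep_spoint (k : beta_kind) : spoint :=
  SP (Lev (canon k Alpha)) (Lev (canon k Beta)) (Lev PosInf).

Definition orbit_words (k : beta_kind) : PositiveMap.t (list stwist) :=
  search _ _ spoint_key (fun m => map (fun t => (t, stwist_inv k t m)) all_stwists)
    (rep_spoint k).

(* The cells of the cluster, each with a word reaching it from [rep_spoint k],
   sorted by solved colour so that the last two cells share one. *)
Definition cluster_table_of (k : beta_kind) : list (spoint * list stwist) :=
  let orbit := map (fun kw => (ssource k (snd kw) (rep_spoint k), snd kw))
                   (PositiveMap.elements (orbit_words k)) in
  flat_map (fun col => filter (fun mw => if ocolor_eq_dec (ssolved (fst mw)) (Some col)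
                                         then true else false) orbit)
           all_colors.

Definition cluster_table_other := Eval vm_compute in cluster_table_of BetaOther.
Definition cluster_table_zero := Eval vm_compute in cluster_table_of BetaZero.
Definition cluster_table_alpha := Eval vm_compute in cluster_table_of BetaAlpha.

Definition cluster_table (k : beta_kind) : list (spoint * list stwist) :=
  match k with
  | BetaOther => cluster_table_other
  | BetaZero => cluster_table_zero
  | BetaAlpha => cluster_table_alpha
  end.

Definition sdefault : spoint := SP (Lev PosInf) (Lev PosInf) (Lev PosInf).

Definition cluster_cells (k : beta_kind) : list spoint := map fst (cluster_table k).

Definition cell_at (k : beta_kind) (a : nat) : spoint := nth a (cluster_cells k) sdefault.

Definition orbit_word (k : beta_kind) (a : nat) : list stwist :=
  snd (nth a (cluster_table k) (sdefault, [])).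

Fixpoint index_of (m : spoint) (l : list spoint) : nat :=
  match l with
  | [] => 0
  | n :: l => if spoint_eq_dec m n then 0 else S (index_of m l)
  end.

Definition word_position (k : beta_kind) (S : list spoint) (w : list stwist) (a : nat) : nat :=
  index_of (ssource k w (nth a S sdefault)) S.

Definition rotate3 (i j l a : nat) : nat :=
  if a =? i then j else if a =? j then l else if a =? l then i else a.

Definition third (i j : nat) : nat := if j =? i + 1 then i + 2 else i + 1.

Definition triple_key (st : list nat) : positive :=
  fold_left (fun acc a => (acc * 32 + Pos.of_succ_nat a)%positive) st 1%positive.

(* [base_cycle] moves the cells at positions [a -> b -> c -> a]; the search
   finds, for each ordered triple [(i, j, l)], a word [z] carrying [(a, b, c)]
   to it, so that [z ++ base_cycle ++ sword_inv z] realises [rotate3 i j l]. *)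
Definition conjugator_table (k : beta_kind) (S : list spoint) : PositiveMap.t (list stwist) :=
  let perms := map (fun t => (t, map (word_position k S [t]) (seq 0 24))) all_stwists in
  let pb := map (word_position k S base_cycle) (seq 0 24) in
  let a := hd 0 (filter (fun a => negb (nth a pb 0 =? a)) (seq 0 24)) in
  let b := nth a pb 0 in
  search _ _ triple_key
    (fun st => map (fun tp => (fst tp, map (fun x => nth x (snd tp) 0) st)) perms)
    [a; b; nth b pb 0].

Definition conjugators_of (k : beta_kind) : list (list (list stwist)) :=
  let T := conjugator_table k (cluster_cells k) in
  map (fun i => map (fun j => search_word T (triple_key [i; j; third i j]))
                    (seq (i + 1) (23 - i))) (seq 0 22).

Definition conjugators_other := Eval vm_compute in conjugators_of BetaOther.
Definition conjugators_zero := Eval vm_compute in conjugators_of BetaZero.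
Definition conjugators_alpha := Eval vm_compute in conjugators_of BetaAlpha.

Definition conjugators (k : beta_kind) : list (list (list stwist)) :=
  match k with
  | BetaOther => conjugators_other
  | BetaZero => conjugators_zero
  | BetaAlpha => conjugators_alpha
  end.

Definition cycle_word (k : beta_kind) (i j : nat) : list stwist :=
  let z := nth (j - (i + 1)) (nth i (conjugators k) []) [] in
  z ++ base_cycle ++ sword_inv z.

(* Nothing is proved about the search: [certified] checks every property of its
   results that the proof uses. *)
Definition mem (m : spoint) (S : list spoint) : bool := existsb (spoint_eqb m) S.

Definition cells_ok (S : list spoint) : bool :=
  (length S =? 24) && forallb (fun m => levelled m && scell m) S.

Definition closed_ok (k : beta_kind) (S : list spoint) : bool :=
  forallb (fun m => forallb (fun i => forallb (fun s => mem (sqt k i s m) S)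
                                              all_levels) all_axes) S.

Definition perm_ok (k : beta_kind) (S : list spoint) : bool :=
  forallb (fun t => let P := map (word_position k S [t]) (seq 0 24) in
                    forallb (fun b => existsb (Nat.eqb b) P) (seq 0 24))
          all_stwists.

Definition paths_ok (k : beta_kind) (S : list spoint) : bool :=
  mem (rep_spoint k) S &&
  forallb (fun a => spoint_eqb (ssource k (orbit_word k a) (rep_spoint k)) (nth a S sdefault))
          (seq 0 24).

Definition colours_ok (S : list spoint) : bool :=
  forallb (fun col => count_occ ocolor_eq_dec (map ssolved S) (Some col) =? 4) all_colors &&
  (if ocolor_eq_dec (ssolved (nth 22 S sdefault)) (ssolved (nth 23 S sdefault))
   then true else false).

Definition cycle_ok (k : beta_kind) (S : list spoint) (w : list stwist) (i j : nat) : bool :=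
  forallb (fun a => spoint_eqb (ssource k w (nth a S sdefault))
                               (nth (rotate3 i j (third i j) a) S sdefault)) (seq 0 24) &&
  forallb (fun m => negb (scell m) || mem m S || spoint_eqb (ssource k w m) m) (shapes k).

Definition cycles_ok (k : beta_kind) (S : list spoint) : bool :=
  forallb (fun i => forallb (fun j => cycle_ok k S (cycle_word k i j) i j)
                            (seq (i + 1) (23 - i))) (seq 0 22).

Definition certified (k : beta_kind) : bool :=
  let S := cluster_cells k in
  cells_ok S && closed_ok k S && perm_ok k S && paths_ok k S && colours_ok S && cycles_ok k S.

Lemma certified_true k : certified k = true.
Proof. destruct k; vm_compute; reflexivity. Qed.

Lemma certified_spec k :
  cells_ok (cluster_cells k) = true /\ closed_ok k (cluster_cells k) = true /\
  perm_ok k (cluster_cells k) = true /\ paths_ok k (cluster_cells k) = true /\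
  colours_ok (cluster_cells k) = true /\ cycles_ok k (cluster_cells k) = true.
Proof.
  pose proof (certified_true k) as H. unfold certified in H.
  repeat rewrite andb_true_iff in H. tauto.
Qed.

Lemma spoint_eqb_refl m : spoint_eqb m m = true.
Proof. unfold spoint_eqb. destruct (spoint_eq_dec m m); congruence. Qed.

Lemma mem_In m S : mem m S = true <-> In m S.
Proof.
  unfold mem. rewrite existsb_exists. split.
  - intros [n [Hn E]]. apply spoint_eqb_eq in E. subst. exact Hn.
  - intro Hm. exists m. split; [exact Hm | apply spoint_eqb_refl].
Qed.

Lemma map_nth_seq {A : Type} (l : list A) d : map (fun a => nth a l d) (seq 0 (length l)) = l.
Proof.
  apply (nth_ext _ _ d d); [now rewrite length_map, length_seq|].
  intros n Hn. rewrite length_map, length_seq in Hn.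
  rewrite (nth_indep _ d (nth 0 l d)) by now rewrite length_map, length_seq.
  rewrite (map_nth (fun a => nth a l d)), seq_nth by exact Hn. reflexivity.
Qed.

Lemma forallb_seq_spec f a n : forallb f (seq a n) = true -> forall m, a <= m < a + n -> f m = true.
Proof. rewrite forallb_forall. intros H m Hm. apply H, in_seq. lia. Qed.

Lemma index_of_spec m l : In m l -> index_of m l < length l /\ nth (index_of m l) l sdefault = m.
Proof.
  induction l as [|n l IH]; [contradiction|]. simpl.
  destruct (spoint_eq_dec m n) as [->|Hne]; intro Hin; [split; [lia | reflexivity]|].
  destruct Hin as [-> | Hin]; [congruence|].
  destruct (IH Hin). split; [lia | assumption].
Qed.

Lemma In_all_axes i : In i all_axes.
Proof. destruct i; simpl; tauto. Qed.

Lemma In_all_levels s : In s all_levels.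
Proof. destruct s; simpl; tauto. Qed.

Lemma In_all_colors col : In col all_colors.
Proof. destruct col; simpl; tauto. Qed.

Lemma In_all_stwists t : In t all_stwists.
Proof.
  destruct t as [[i s] j]. apply in_flat_map. exists i. split; [apply In_all_axes|].
  apply in_flat_map. exists s. split; [apply In_all_levels|].
  apply in_map. destruct j; simpl; tauto.
Qed.

Lemma rotate3_first i j l : rotate3 i j l i = j.
Proof. unfold rotate3. now rewrite Nat.eqb_refl. Qed.

Lemma rotate3_other i j l a : a <> i -> a <> j -> a <> l -> rotate3 i j l a = a.
Proof.
  intros. unfold rotate3.
  repeat match goal with |- context [?x =? ?y] => destruct (Nat.eqb_spec x y) end; lia.
Qed.

Lemma third_spec i j : i < 22 -> i < j < 24 -> i < third i j < 24 /\ third i j <> j.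
Proof. intros. unfold third. destruct (Nat.eqb_spec j (i + 1)); lia. Qed.

Lemma rotate3_permutation n i j l : i < n -> j < n -> l < n -> i <> j -> j <> l -> i <> l ->
  Permutation (map (rotate3 i j l) (seq 0 n)) (seq 0 n).
Proof.
  intros. apply Permutation_map_seq; intros; unfold rotate3 in *;
    repeat match goal with |- context [?x =? ?y] => destruct (Nat.eqb_spec x y) end;
    repeat match goal with H : context [?x =? ?y] |- _ => destruct (Nat.eqb_spec x y) end;
    lia.
Qed.

Section Certificate.
Variable k : beta_kind.

Lemma cluster_cells_length : length (cluster_cells k) = 24.
Proof.
  destruct (certified_spec k) as [H _]. apply andb_true_iff in H as [H _].
  apply Nat.eqb_eq, H.
Qed.

Lemma In_cluster_cells m : In m (cluster_cells k) -> exists a, a < 24 /\ cell_at k a = m.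
Proof.
  intro Hm. apply (In_nth _ _ sdefault) in Hm as [a [Ha E]].
  rewrite cluster_cells_length in Ha. exists a. auto.
Qed.

Lemma cell_at_In a : a < 24 -> In (cell_at k a) (cluster_cells k).
Proof. intro Ha. apply nth_In. rewrite cluster_cells_length. exact Ha. Qed.

Lemma cell_at_levelled a : a < 24 -> levelled (cell_at k a) = true /\ scell (cell_at k a) = true.
Proof.
  intro Ha. destruct (certified_spec k) as [H _].
  apply andb_true_iff in H as [_ H]. rewrite forallb_forall in H.
  apply andb_true_iff, H, cell_at_In, Ha.
Qed.

Lemma cluster_closed_sqt a i s :
  a < 24 -> exists b, b < 24 /\ sqt k i s (cell_at k a) = cell_at k b.
Proof.
  intro Ha. destruct (certified_spec k) as [_ [H _]]. unfold closed_ok in H.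
  rewrite forallb_forall in H. specialize (H _ (cell_at_In a Ha)).
  rewrite forallb_forall in H. specialize (H i (In_all_axes i)).
  rewrite forallb_forall in H. specialize (H s (In_all_levels s)).
  apply mem_In, In_cluster_cells in H as [b [Hb E]]. eauto.
Qed.

Lemma cluster_closed_stwist a t :
  a < 24 -> exists b, b < 24 /\ stwist_inv k t (cell_at k a) = cell_at k b.
Proof.
  intro Ha. destruct t as [[i s] j]. unfold stwist_inv.
  induction (4 - pow_nat j) as [|n IH]; [eauto|].
  destruct IH as [b [Hb E]]. simpl. rewrite E. apply cluster_closed_sqt, Hb.
Qed.

Lemma stwist_permutes_cells t : exists pi : nat -> nat,
  Permutation (map pi (seq 0 24)) (seq 0 24) /\
  forall a, a < 24 -> stwist_inv k t (cell_at k a) = cell_at k (pi a).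
Proof.
  exists (word_position k (cluster_cells k) [t]).
  assert (Hpos : forall a, a < 24 -> word_position k (cluster_cells k) [t] a < 24 /\
            stwist_inv k t (cell_at k a) = cell_at k (word_position k (cluster_cells k) [t] a)).
  { intros a Ha. destruct (cluster_closed_stwist a t Ha) as [b [Hb E]].
    destruct (index_of_spec (cell_at k b) (cluster_cells k) (cell_at_In b Hb)) as [I1 I2].
    unfold word_position. simpl. fold (cell_at k a). rewrite E, cluster_cells_length in *.
    split; [exact I1|]. unfold cell_at at 2. rewrite I2. reflexivity. }
  split; [|intros a Ha; apply Hpos, Ha].
  symmetry. apply NoDup_Permutation_bis; [apply seq_NoDup | now rewrite length_map |].
  intros b Hb. destruct (certified_spec k) as [_ [_ [H _]]]. unfold perm_ok in H.
  rewrite forallb_forall in H. specialize (H t (In_all_stwists t)).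
  rewrite forallb_forall in H. specialize (H b Hb).
  apply existsb_exists in H as [a [Ha E]]. apply Nat.eqb_eq in E. now subst.
Qed.

Lemma rep_spoint_in_cluster : exists a, a < 24 /\ cell_at k a = rep_spoint k.
Proof.
  destruct (certified_spec k) as [_ [_ [_ [H _]]]]. apply andb_true_iff in H as [H _].
  apply mem_In, In_cluster_cells in H. exact H.
Qed.

Lemma orbit_word_spec a :
  a < 24 -> ssource k (orbit_word k a) (rep_spoint k) = cell_at k a.
Proof.
  intro Ha. destruct (certified_spec k) as [_ [_ [_ [H _]]]]. apply andb_true_iff in H as [_ H].
  apply spoint_eqb_eq, (forallb_seq_spec _ _ _ H a). lia.
Qed.

Lemma solved_colour_count col :
  count_occ ocolor_eq_dec (map (fun a => ssolved (cell_at k a)) (seq 0 24)) (Some col) = 4.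
Proof.
  destruct (certified_spec k) as [_ [_ [_ [_ [H _]]]]]. apply andb_true_iff in H as [H _].
  rewrite forallb_forall in H. specialize (H col (In_all_colors col)).
  apply Nat.eqb_eq in H. rewrite <- (map_nth_seq (cluster_cells k) sdefault), map_map,
    cluster_cells_length in H.
  exact H.
Qed.

Lemma last_cells_same_colour : ssolved (cell_at k 22) = ssolved (cell_at k 23).
Proof.
  destruct (certified_spec k) as [_ [_ [_ [_ [H _]]]]]. apply andb_true_iff in H as [_ H].
  destruct (ocolor_eq_dec _ _) as [E|]; [exact E | discriminate].
Qed.

Lemma cycle_word_spec i j : i < 22 -> i < j < 24 ->
  (forall a, a < 24 ->
     ssource k (cycle_word k i j) (cell_at k a) = cell_at k (rotate3 i j (third i j) a)) /\
  (forall m, In m (shapes k) -> scell m = true -> ~ In m (cluster_cells k) ->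
     ssource k (cycle_word k i j) m = m).
Proof.
  intros Hi Hj. destruct (certified_spec k) as [_ [_ [_ [_ [_ H]]]]].
  pose proof (forallb_seq_spec _ _ _ H i ltac:(lia)) as Hi'. cbv beta in Hi'.
  pose proof (forallb_seq_spec _ _ _ Hi' j ltac:(lia)) as Hij. cbv beta in Hij.
  apply andb_true_iff in Hij as [H1 H2]. split.
  - intros a Ha. apply spoint_eqb_eq, (forallb_seq_spec _ _ _ H1 a). lia.
  - intros m Hm Hc Hn. rewrite forallb_forall in H2. specialize (H2 m Hm).
    rewrite Hc in H2. destruct (mem m (cluster_cells k)) eqn:E.
    + apply mem_In in E. contradiction.
    + apply spoint_eqb_eq, H2.
Qed.

End Certificate.

(** * Interpretation in the cube *)

Section Interpretation.
Context {L : Type} (alpha : L) (beta : Ldag L).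

Definition level_val (s : level) : coord L :=
  match s with
  | Alpha => Fin (LPos alpha) | NAlpha => Fin (LNeg alpha)
  | Beta => Fin beta | NBeta => Fin (ldneg beta)
  | PosInf => PInf | NegInf => NInf
  end.

Definition beta_kind_spec (k : beta_kind) : Prop :=
  match k with
  | BetaOther => exists b, beta = LPos b /\ b <> alpha
  | BetaZero => beta = LZero
  | BetaAlpha => beta = LPos alpha
  end.

Lemma level_val_neg s : level_val (level_neg s) = cneg (level_val s).
Proof. destruct s; try reflexivity. simpl. now destruct beta. Qed.

Definition eval_coord (p : point L) (x : scoord) : coord L :=
  match x with
  | Lev s => level_val s
  | Var i b => if b then pcoord i p else cneg (pcoord i p)
  end.

Definition eval_point (p : point L) (m : spoint) : point L :=
  mkP (eval_coord p (sx m)) (eval_coord p (sy m)) (eval_coord p (sz m)).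

Definition cell_of (m : spoint) : point L := eval_point (mkP PInf PInf PInf) m.

Definition off_levels (x : coord L) : Prop := forall s, x <> level_val s.

(* The [Var] coordinates must not be levels, so that [at_level] decides the
   condition of a twist on [eval_point p m] correctly. *)
Definition wf_coord (p : point L) (x : scoord) : Prop :=
  match x with Lev _ => True | Var i _ => off_levels (pcoord i p) end.

Definition wf_point (p : point L) (m : spoint) : Prop :=
  wf_coord p (sx m) /\ wf_coord p (sy m) /\ wf_coord p (sz m).

Definition twist_of (t : stwist) : twist L :=
  let '(i, s, j) := t in mkTw i (level_val s) j.

Lemma off_levels_cneg x : off_levels x -> off_levels (cneg x).
Proof.
  intros H s E. apply (H (level_neg s)).
  rewrite level_val_neg, <- E. symmetry. apply cneg_involutive.
Qed.

Lemma pcoord_eval_point i p m : pcoord i (eval_point p m) = eval_coord p (spcoord i m).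
Proof. destruct i; reflexivity. Qed.

Lemma wf_coord_spcoord i p m : wf_point p m -> wf_coord p (spcoord i m).
Proof. intros (? & ? & ?). destruct i; assumption. Qed.

Lemma levelled_wf_point p m : levelled m = true -> wf_point p m.
Proof. destruct m as [[] [] []]; try discriminate. repeat split. Qed.

Lemma eval_point_levelled p m : levelled m = true -> eval_point p m = cell_of m.
Proof. destruct m as [[] [] []]; try discriminate. reflexivity. Qed.

Lemma solved_cell_of m : levelled m = true -> solved L (cell_of m) = ssolved m.
Proof. destruct m as [[[]|] [[]|] [[]|]]; try discriminate; reflexivity. Qed.

Lemma is_inf_eval p x : wf_coord p x -> (is_inf (eval_coord p x) <-> is_infb x = true).
Proof.
  unfold is_inf. destruct x as [s|i []]; simpl; intro G.
  - destruct s; simpl; intuition discriminate.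
  - split; [|discriminate]. intros [E|E]; exfalso; [apply (G PosInf) | apply (G NegInf)]; exact E.
  - apply off_levels_cneg in G. split; [|discriminate].
    intros [E|E]; exfalso; [apply (G PosInf) | apply (G NegInf)]; exact E.
Qed.

Lemma is_cell_eval p m : wf_point p m -> (is_cell (eval_point p m) <-> scell m = true).
Proof.
  intros (Gx & Gy & Gz). unfold is_cell, scell. simpl.
  rewrite (is_inf_eval _ _ Gx), (is_inf_eval _ _ Gy), (is_inf_eval _ _ Gz).
  destruct (is_infb (sx m)), (is_infb (sy m)), (is_infb (sz m)); simpl; intuition discriminate.
Qed.

Context (k : beta_kind) (Hk : beta_kind_spec k).

Lemma level_val_inj s t : level_val s = level_val t <-> canon k s = canon k t.
Proof.
  destruct k; simpl in Hk;
    [destruct Hk as [b [Hb Hba]] | pose proof Hk as Hb | pose proof Hk as Hb];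
    destruct s, t; simpl; rewrite ?Hb; simpl; split; intro E;
    try reflexivity; try discriminate; inversion E; congruence.
Qed.

Lemma level_val_canon s : level_val (canon k s) = level_val s.
Proof. apply level_val_inj. destruct k, s; reflexivity. Qed.

Lemma eval_sneg p x : eval_coord p (sneg k x) = cneg (eval_coord p x).
Proof.
  destruct x as [s|i []]; simpl.
  - rewrite level_val_canon. apply level_val_neg.
  - reflexivity.
  - symmetry. apply cneg_involutive.
Qed.

Lemma eval_at_level p x s :
  wf_coord p x -> (eval_coord p x = level_val s <-> at_level k x s = true).
Proof.
  destruct x as [t|i b]; simpl; intro G.
  - rewrite level_val_inj. destruct (level_eq_dec _ _); intuition discriminate.
  - split; [|discriminate]. intro E. exfalso.
    destruct b; [exact (G s E) | exact (off_levels_cneg _ G s E)].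
Qed.

Lemma wf_point_sqt p m i s : wf_point p m -> wf_point p (sqt k i s m).
Proof.
  assert (Hneg : forall x, wf_coord p x -> wf_coord p (sneg k x)) by (intros []; auto).
  intros (Gx & Gy & Gz). unfold sqt. destruct (at_level _ _ _); [|now repeat split].
  destruct i; repeat split; simpl; auto.
Qed.

Lemma qt_eval p m i s :
  wf_point p m -> qt i (level_val s) (eval_point p m) = eval_point p (sqt k i s m).
Proof.
  intro G. unfold qt, sqt. rewrite pcoord_eval_point.
  pose proof (eval_at_level p (spcoord i m) s (wf_coord_spcoord i p m G)) as E.
  destruct (excluded_middle_informative _) as [H|H];
    destruct (at_level k (spcoord i m) s); try tauto.
  - destruct i; unfold eval_point; simpl; rewrite ?eval_sneg; reflexivity.
  - exfalso. intuition discriminate.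
Qed.

Lemma iter_qt_eval p m i s n :
  wf_point p m -> Nat.iter n (qt i (level_val s)) (eval_point p m) =
                  eval_point p (Nat.iter n (sqt k i s) m) /\
                  wf_point p (Nat.iter n (sqt k i s) m).
Proof.
  intro G. induction n as [|n [IH G']]; simpl; [auto|].
  rewrite IH. split; [apply qt_eval | apply wf_point_sqt]; exact G'.
Qed.

Lemma twist_inv_eval p m t :
  wf_point p m -> twist_inv (twist_of t) (eval_point p m) = eval_point p (stwist_inv k t m) /\
                  wf_point p (stwist_inv k t m).
Proof. destruct t as [[i s] j]. apply iter_qt_eval. Qed.

Lemma source_cell_eval p m w :
  wf_point p m -> source_cell (map twist_of w) (eval_point p m) = eval_point p (ssource k w m) /\
                  wf_point p (ssource k w m).
Proof.
  intro G. induction w as [|t w [IH G']]; simpl; [auto|].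
  rewrite IH. apply twist_inv_eval, G'.
Qed.

Definition abstract_coord (i : axis) (x : coord L) : scoord :=
  match excluded_middle_informative (exists s, x = level_val s) with
  | left H => Lev (canon k (proj1_sig (constructive_indefinite_description _ H)))
  | right _ => Var i true
  end.

Definition abstract_point (p : point L) : spoint :=
  SP (abstract_coord AX (px p)) (abstract_coord AY (py p)) (abstract_coord AZ (pz p)).

Lemma abstract_coord_spec p i :
  let x := abstract_coord i (pcoord i p) in
  eval_coord p x = pcoord i p /\ wf_coord p x /\ In x (shape_coords k i).
Proof.
  unfold abstract_coord. destruct (excluded_middle_informative _) as [H|H].
  - destruct (constructive_indefinite_description _ H) as [s E]. cbn zeta.
    cbn [proj1_sig eval_coord wf_coord]. rewrite level_val_canon. split; [auto | split; [exact I|]].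
    apply in_app_iff. left. apply (in_map (fun s => Lev (canon k s))), In_all_levels.
  - cbn zeta. cbn [eval_coord wf_coord]. split; [reflexivity | split].
    + intros s E. apply H. eauto.
    + apply in_app_iff. right. left. reflexivity.
Qed.

Lemma abstract_point_spec p :
  eval_point p (abstract_point p) = p /\ wf_point p (abstract_point p) /\
  In (abstract_point p) (shapes k).
Proof.
  destruct (abstract_coord_spec p AX) as (Ex & Gx & Ix).
  destruct (abstract_coord_spec p AY) as (Ey & Gy & Iy).
  destruct (abstract_coord_spec p AZ) as (Ez & Gz & Iz).
  split; [|split].
  - unfold eval_point, abstract_point. simpl in *. rewrite Ex, Ey, Ez. now destruct p.
  - repeat split; assumption.
  - apply in_flat_map. eexists; split; [exact Ix|].
    apply in_flat_map. eexists; split; [exact Iy|]. apply (in_map (SP _ _)), Iz.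
Qed.

End Interpretation.

(** * Sorting the cluster *)

Section Cluster.
Context {L : Type} (alpha : L) (beta : Ldag L) (k : beta_kind).
Hypothesis Hk : beta_kind_spec alpha beta k.

Definition cell (a : nat) : point L := cell_of alpha beta (cell_at k a).

Definition rep : point L := mkP (Fin (LPos alpha)) (Fin beta) PInf.

Lemma cell_is_cell a : a < 24 -> is_cell (cell a).
Proof.
  intro Ha. destruct (cell_at_levelled k a Ha) as [H1 H2].
  apply is_cell_eval; [apply levelled_wf_point |]; assumption.
Qed.

Lemma rep_eval : rep = cell_of alpha beta (rep_spoint k).
Proof. unfold rep, cell_of, eval_point. simpl. now rewrite !(level_val_canon _ _ k Hk). Qed.

Lemma cell_in_cluster a : a < 24 -> same_cluster rep (cell a).
Proof.
  intro Ha. unfold cell. rewrite <- (orbit_word_spec k a Ha), rep_eval. unfold cell_of.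
  rewrite <- (proj1 (source_cell_eval alpha beta k Hk _ (rep_spoint k) (orbit_word k a)
                       (levelled_wf_point alpha beta _ (rep_spoint k) eq_refl))).
  apply same_cluster_source.
Qed.

Lemma qt_off_levels i c a :
  a < 24 -> (forall s, c <> level_val alpha beta s) -> qt i c (cell a) = cell a.
Proof.
  intros Ha Hc. unfold qt. destruct (excluded_middle_informative _) as [E|]; [exfalso|reflexivity].
  unfold cell, cell_of in E. rewrite pcoord_eval_point in E.
  destruct (cell_at_levelled k a Ha) as [Hl _]. revert E Hl.
  destruct (cell_at k a) as [[] [] []]; try discriminate;
    destruct i; intros E _; exact (Hc _ (eq_sym E)).
Qed.

Lemma qt_cell i c a : a < 24 -> exists b, b < 24 /\ qt i c (cell a) = cell b.
Proof.
  intro Ha. destruct (classic (exists s, c = level_val alpha beta s)) as [[s ->]|Hc].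
  - destruct (cluster_closed_sqt k a i s Ha) as [b [Hb E]]. exists b. split; [exact Hb|].
    unfold cell, cell_of. rewrite <- E.
    apply qt_eval; [exact Hk | apply levelled_wf_point, cell_at_levelled, Ha].
  - exists a. split; [exact Ha|]. apply qt_off_levels; [exact Ha|]. intros s E. eauto.
Qed.

Lemma cluster_cover x : same_cluster rep x -> exists a, a < 24 /\ x = cell a.
Proof.
  intro H.
  assert (Hrep : exists a, a < 24 /\ rep = cell a).
  { destruct (rep_spoint_in_cluster k) as [a [Ha E]]. exists a. split; [exact Ha|].
    unfold cell. rewrite E. apply rep_eval. }
  revert Hrep. induction H as [u v [i [c ->]] | u | u v w _ IH1 _ IH2]; auto.
  intros [a [Ha ->]]. destruct (qt_cell i c a Ha) as [b [Hb E]]. eauto.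
Qed.

Lemma twist_permutes_cells (sg : twist L) : exists pi : nat -> nat,
  Permutation (map pi (seq 0 24)) (seq 0 24) /\
  forall a, a < 24 -> twist_inv sg (cell a) = cell (pi a).
Proof.
  destruct sg as [i c j].
  destruct (classic (exists s, c = level_val alpha beta s)) as [[s ->]|Hc].
  - destruct (stwist_permutes_cells k (i, s, j)) as [pi [Hpi Hcell]].
    exists pi. split; [exact Hpi|]. intros a Ha.
    unfold cell, cell_of. rewrite <- (Hcell a Ha).
    apply (twist_inv_eval _ _ k Hk _ _ (i, s, j)), levelled_wf_point, cell_at_levelled, Ha.
  - exists (fun a => a). split; [now rewrite map_id|]. intros a Ha.
    unfold twist_inv. cbn [tw_axis tw_level tw_pow].
    induction (4 - pow_nat j) as [|n IH]; [reflexivity|].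
    simpl. rewrite IH. apply qt_off_levels; [exact Ha|]. intros s E. eauto.
Qed.

Lemma cycle_word_cells i j a : i < 22 -> i < j < 24 -> a < 24 ->
  source_cell (map (twist_of alpha beta) (cycle_word k i j)) (cell a) =
  cell (rotate3 i j (third i j) a).
Proof.
  intros Hi Hj Ha. unfold cell, cell_of.
  rewrite (proj1 (source_cell_eval _ _ k Hk _ _ _
                    (levelled_wf_point _ _ _ _ (proj1 (cell_at_levelled k a Ha))))).
  f_equal. apply cycle_word_spec; assumption.
Qed.

Lemma cycle_word_outside i j x : i < 22 -> i < j < 24 -> is_cell x ->
  (forall a, a < 24 -> x <> cell a) ->
  source_cell (map (twist_of alpha beta) (cycle_word k i j)) x = x.
Proof.
  intros Hi Hj Hx Hout.
  destruct (abstract_point_spec alpha beta k Hk x) as (E & G & Hs).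
  rewrite <- E at 1. rewrite (proj1 (source_cell_eval _ _ k Hk _ _ _ G)).
  rewrite (proj2 (cycle_word_spec k i j Hi Hj)); [exact E | exact Hs | |].
  - apply (is_cell_eval alpha beta x); [exact G | now rewrite E].
  - intro Hin. apply In_cluster_cells in Hin as [a [Ha Ea]]. apply (Hout a Ha).
    rewrite <- E, <- Ea. apply eval_point_levelled, cell_at_levelled, Ha.
Qed.

Local Notation count := (count_occ ocolor_eq_dec).

Definition cluster_colours (g : config L) : list (option color) :=
  map (fun a => g (cell a)) (seq 0 24).

Definition solved_colours : list (option color) :=
  map (fun a => ssolved (cell_at k a)) (seq 0 24).

Lemma cluster_colours_ext (g1 g2 : config L) :
  (forall x, is_cell x -> g1 x = g2 x) -> cluster_colours g1 = cluster_colours g2.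
Proof.
  intro H. apply map_ext_in. intros a Ha. apply in_seq in Ha.
  apply H, cell_is_cell. lia.
Qed.

Lemma cluster_colours_solved : cluster_colours (solved L) = solved_colours.
Proof.
  apply map_ext_in. intros a Ha. apply in_seq in Ha.
  apply solved_cell_of, cell_at_levelled. lia.
Qed.

Lemma cluster_colours_act sg g : Permutation (cluster_colours (act sg g)) (cluster_colours g).
Proof.
  destruct (twist_permutes_cells sg) as [pi [Hpi Hcell]].
  transitivity (map (fun a => g (cell a)) (map pi (seq 0 24))).
  - unfold cluster_colours. rewrite map_map.
    erewrite map_ext_in; [reflexivity|].
    intros a Ha. apply in_seq in Ha. unfold act. f_equal. apply Hcell. lia.
  - unfold cluster_colours. apply Permutation_map, Hpi.
Qed.

Lemma colour_count_run {W : Type} (lt : W -> W -> Prop) sigma F :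
  well_order lt -> Run lt sigma (solved L) F ->
  forall s col, count (cluster_colours (F s)) (Some col) <= 4.
Proof.
  intros [wf [tr tot]] HR s.
  induction s as [s IH] using (well_founded_ind (slt_wf lt wf)). intro col.
  destruct (HR s) as [Hzero [Hsucc _]].
  destruct (classic (exists t, slt lt t s)) as [Hne | Hempty].
  2: { rewrite (cluster_colours_ext _ (solved L)), cluster_colours_solved.
       - unfold solved_colours. rewrite (solved_colour_count k col). lia.
       - apply Hzero. intros t Ht. eauto. }
  destruct (classic (forall t, slt lt t s -> exists u, slt lt t u /\ slt lt u s))
    as [Hl | Hs].
  - assert (Hev : forall a, In a (seq 0 24) -> eventually_below (slt lt) s
              (fun u => F s (cell a) = Some col -> F u (cell a) = Some col)).
    { intros a Ha. apply in_seq in Ha.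
      destruct (classic (F s (cell a) = Some col)) as [E | NE].
      - destruct (Run_limit_eventually lt sigma _ F s (cell a) col HR Hne Hl
                    (cell_is_cell a ltac:(lia)) E) as [t [Ht Hu]].
        exists t. split; [exact Ht|]. intros u H1 H2 _. exact (Hu u H1 H2).
      - destruct Hne as [t Ht]. exists t. split; [exact Ht|]. intros u _ _ E. contradiction. }
    destruct (eventually_below_Forall (slt lt) (slt_trans lt tr) (slt_total lt tot) s _ _
                Hne Hev) as [u [Hu Hall]].
    eapply Nat.le_trans; [| apply (IH u Hu col)].
    apply count_occ_map_le. intros a Ha E. exact (Hall u (or_introl eq_refl) Hu a Ha E).
  - apply not_all_ex_not in Hs as [t Ht]. apply imply_to_and in Ht as [Hts Hnone].
    destruct t as [w|]; [|contradiction].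
    assert (Hnext : forall t, ~ (slt lt (Some w) t /\ slt lt t s)) by (intros t [H1 H2]; eauto).
    rewrite (cluster_colours_ext _ (act (sigma w) (F (Some w))) (Hsucc w Hts Hnext)).
    rewrite (proj1 (Permutation_count_occ ocolor_eq_dec _ _) (cluster_colours_act _ _)).
    apply IH, Hts.
Qed.

Lemma legal_accessible_colours f :
  legal f -> accessible (solved L) f -> Permutation (cluster_colours f) solved_colours.
Proof.
  intros Hlegal [W [lt [sigma [F [Hwo [HR Hfin]]]]]].
  assert (Hle : forall col, count (cluster_colours f) (Some col) <= 4).
  { intro col. rewrite (cluster_colours_ext f (F None)) by (intros; symmetry; auto).
    apply (colour_count_run lt sigma F Hwo HR). }
  assert (HNaC : count (cluster_colours f) None = 0).
  { apply count_occ_not_In. intro Hin. apply in_map_iff in Hin as [a [E Ha]].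
    apply in_seq in Ha. apply (Hlegal (cell a)); [apply cell_is_cell; lia | exact E]. }
  pose proof (length_count_colours (cluster_colours f)) as Hf.
  pose proof (length_count_colours solved_colours) as Hs.
  unfold cluster_colours, solved_colours in Hf, Hs. rewrite length_map, length_seq in Hf, Hs.
  fold (cluster_colours f) solved_colours in Hf, Hs.
  pose proof (solved_colour_count k) as H4. fold solved_colours in H4.
  pose proof (Hle Red). pose proof (Hle White). pose proof (Hle Green).
  pose proof (Hle Orange). pose proof (Hle Yellow). pose proof (Hle Blue).
  pose proof (H4 Red). pose proof (H4 White). pose proof (H4 Green).
  pose proof (H4 Orange). pose proof (H4 Yellow). pose proof (H4 Blue).
  apply (Permutation_count_occ ocolor_eq_dec). intros [[]|]; lia.
Qed.

Definition solved_upto (g : config L) (i : nat) : Prop :=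
  forall a, a < i -> g (cell a) = ssolved (cell_at k a).

Lemma suffix_colours g i : i <= 24 -> solved_upto g i ->
  Permutation (cluster_colours g) solved_colours ->
  Permutation (map (fun a => g (cell a)) (seq i (24 - i)))
              (map (fun a => ssolved (cell_at k a)) (seq i (24 - i))).
Proof.
  intros Hi Hup Hperm. unfold cluster_colours, solved_colours in Hperm.
  replace (seq 0 24) with (seq 0 i ++ seq i (24 - i)) in Hperm
    by (rewrite <- seq_app; f_equal; lia).
  rewrite !map_app in Hperm.
  replace (map (fun a => g (cell a)) (seq 0 i))
    with (map (fun a => ssolved (cell_at k a)) (seq 0 i)) in Hperm.
  - exact (Permutation_app_inv_l _ _ _ Hperm).
  - apply map_ext_in. intros a Ha. apply in_seq in Ha. symmetry. apply Hup. lia.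
Qed.

Lemma colour_available g i : i < 24 -> solved_upto g i ->
  Permutation (cluster_colours g) solved_colours ->
  exists j, i <= j < 24 /\ g (cell j) = ssolved (cell_at k i).
Proof.
  intros Hi Hup Hperm.
  assert (Hin : In (ssolved (cell_at k i)) (map (fun a => ssolved (cell_at k a)) (seq i (24 - i))))
    by (apply (in_map (fun a => ssolved (cell_at k a))), in_seq; lia).
  apply (Permutation_in _ (Permutation_sym (suffix_colours g i ltac:(lia) Hup Hperm))) in Hin.
  apply in_map_iff in Hin as [j [E Hj]]. apply in_seq in Hj.
  exists j. split; [lia | exact E].
Qed.

Lemma solved_last_two g : solved_upto g 22 ->
  Permutation (cluster_colours g) solved_colours -> solved_upto g 24.
Proof.
  intros Hup Hperm.
  pose proof (suffix_colours g 22 ltac:(lia) Hup Hperm) as H2. simpl in H2.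
  rewrite <- last_cells_same_colour in H2.
  apply Permutation_length_2 in H2 as [[E1 E2] | [E1 E2]];
    intros a Ha; (destruct (Nat.lt_ge_cases a 22); [apply Hup; lia|]);
    (assert (a = 22 \/ a = 23) as [-> | ->] by lia);
    rewrite ?E1, ?E2; auto using last_cells_same_colour.
Qed.

Lemma cycle_step g i j : i < 22 -> i < j < 24 ->
  let g' := apply_list (map (twist_of alpha beta) (cycle_word k i j)) g in
  (forall a, a < 24 -> g' (cell a) = g (cell (rotate3 i j (third i j) a))) /\
  (forall x, is_cell x -> (forall a, a < 24 -> x <> cell a) -> g' x = g x) /\
  Permutation (cluster_colours g') (cluster_colours g).
Proof.
  intros Hi Hj g'. destruct (third_spec i j Hi Hj) as [Hl Hlj].
  assert (Hcells : forall a, a < 24 -> g' (cell a) = g (cell (rotate3 i j (third i j) a))).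
  { intros a Ha. unfold g'. rewrite apply_list_source, cycle_word_cells; auto. }
  split; [exact Hcells | split].
  - intros x Hx Hout. unfold g'. rewrite apply_list_source, cycle_word_outside; auto.
  - transitivity (map (fun a => g (cell a)) (map (rotate3 i j (third i j)) (seq 0 24))).
    + unfold cluster_colours. rewrite map_map.
      erewrite map_ext_in; [reflexivity|].
      intros a Ha. apply in_seq in Ha. apply Hcells. lia.
    + unfold cluster_colours. apply Permutation_map, rotate3_permutation; lia.
Qed.

Lemma sort_cluster n : forall i g, i + n = 22 -> solved_upto g i ->
  Permutation (cluster_colours g) solved_colours ->
  exists w, solved_upto (apply_list (map (twist_of alpha beta) w) g) 24 /\
    forall x, is_cell x -> (forall a, a < 24 -> x <> cell a) ->
      apply_list (map (twist_of alpha beta) w) g x = g x.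
Proof.
  induction n as [|n IH]; intros i g Hn Hup Hperm.
  - exists []. split; [|reflexivity].
    apply solved_last_two; [replace 22 with i by lia|]; assumption.
  - destruct (classic (g (cell i) = ssolved (cell_at k i))) as [Hi | Hi].
    { apply (IH (S i)); [lia | | exact Hperm].
      intros a Ha. destruct (Nat.eq_dec a i) as [-> | Hai]; [exact Hi | apply Hup; lia]. }
    destruct (colour_available g i ltac:(lia) Hup Hperm) as [j [Hj Ej]].
    assert (Hij : i < j) by (destruct (Nat.eq_dec i j); [subst; contradiction | lia]).
    destruct (third_spec i j ltac:(lia) ltac:(lia)) as [Hl Hlj].
    destruct (cycle_step g i j ltac:(lia) ltac:(lia)) as (Hcells & Hout & Hperm').
    destruct (IH (S i) (apply_list (map (twist_of alpha beta) (cycle_word k i j)) g) ltac:(lia))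
      as [w [Hw Hw']].
    + intros a Ha. rewrite Hcells by lia. destruct (Nat.eq_dec a i) as [-> | Hai].
      * rewrite rotate3_first. exact Ej.
      * rewrite rotate3_other by lia. apply Hup. lia.
    + rewrite Hperm'. exact Hperm.
    + exists (cycle_word k i j ++ w). rewrite map_app, apply_list_app. split; [exact Hw|].
      intros x Hx Hx'. rewrite Hw' by assumption. apply Hout; assumption.
Qed.

Lemma solve_cluster f : legal f -> accessible (solved L) f ->
  exists s : list (twist L),
    (forall t, In t s ->
       is_face t \/
       tw_level t = Fin (LPos alpha) \/ tw_level t = Fin (LNeg alpha) \/
       tw_level t = Fin beta \/ tw_level t = Fin (ldneg beta)) /\
    (forall c, is_cell c -> same_cluster rep c -> apply_list s f c = solved L c) /\
    (forall c, is_cell c -> ~ same_cluster rep c -> apply_list s f c = f c).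
Proof.
  intros Hlegal Hacc.
  destruct (sort_cluster 22 0 f eq_refl ltac:(intros a Ha; lia)
              (legal_accessible_colours f Hlegal Hacc)) as [w [Hsorted Hrest]].
  exists (map (twist_of alpha beta) w). split; [|split].
  - intros t Ht. apply in_map_iff in Ht as [[[i s] j] [<- _]].
    destruct s; simpl; unfold is_face, is_inf; auto.
  - intros c Hc Hcl. destruct (cluster_cover c Hcl) as [a [Ha ->]].
    rewrite Hsorted by exact Ha. symmetry. apply solved_cell_of, cell_at_levelled, Ha.
  - intros c Hc Hcl. apply Hrest; [exact Hc|].
    intros a Ha ->. exact (Hcl (cell_in_cluster a Ha)).
Qed.

End Cluster.

Theorem lemma5p3 (L : Type) (HL : infinite_type L) (f : config L)
  (Hlegal : legal f) (Hacc : accessible (solved L) f)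
  (alpha : L) (beta : Ldag L) (Hbeta : beta = LZero \/ exists b, beta = LPos b) :
  exists s : list (twist L),
    (forall t, In t s ->
       is_face t \/
       tw_level t = Fin (LPos alpha) \/ tw_level t = Fin (LNeg alpha) \/
       tw_level t = Fin beta \/ tw_level t = Fin (ldneg beta)) /\
    (forall c, is_cell c -> same_cluster (mkP (Fin (LPos alpha)) (Fin beta) PInf) c ->
       apply_list s f c = solved L c) /\
    (forall c, is_cell c -> ~ same_cluster (mkP (Fin (LPos alpha)) (Fin beta) PInf) c ->
       apply_list s f c = f c).
Proof.
  destruct Hbeta as [Hzero | [b Hb]].
  - exact (solve_cluster alpha beta BetaZero Hzero f Hlegal Hacc).
  - destruct (classic (b = alpha)) as [-> | Hne].
    + exact (solve_cluster alpha beta BetaAlpha Hb f Hlegal Hacc).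
    + exact (solve_cluster alpha beta BetaOther (ex_intro _ b (conj Hb Hne)) f Hlegal Hacc).
Qed.
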